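(* Let $\Gamma\le\mathrm{Iso}(\mathbb{R}^{r,s})$ be a subgroup whose centralizer in $\mathrm{Iso}(\mathbb{R}^{r,s})$ has an open orbit in $\mathbb{R}^{r,s}$, let $\Delta$ be the center of $\Gamma$, and let $U_0=U_\Gamma\cap U_\Gamma^\perp$. Then $A\cdot U_\Delta^\perp\subseteq U_0$ for every $(I+A,v)\in\Gamma$.
   Context: $\mathbb{R}^{r,s}$ denotes $\mathbb{R}^{n}$, $n=r+s$, with a nondegenerate symmetric bilinear form $\langle\cdot,\cdot\rangle$ of signature $(r,s)$; $\mathrm{Iso}(\mathbb{R}^{r,s})$ is its group of affine isometries, whose elements are written $\gamma=(I+A,v)\colon x\mapsto(I+A)x+v$. For a subset $\Lambda$ of $\Gamma$, $U_\Lambda=\sum_{(I+A,v)\in\Lambda}\operatorname{im}A$; $\perp$ denotes orthogonal complement with respect to $\langle\cdot,\cdot\rangle$. Known facts (Wolf) for such $\Gamma$: every $(I+A,v)\in\Gamma$ satisfies $A^2=0$, $Av=0$, $\langle Ax,y\rangle=-\langle x,Ay\rangle$, $\ker A=(\operatorname{im}A)^\perp$, $\operatorname{im}A$ totally isotropic; for $\gamma_i=(I+A_i,v_i)\in\Gamma$ one has $A_1A_2A_3=0$ and $[\gamma_1,\gamma_2]=(I+2A_1A_2,2A_1v_2)$. *)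

From Stdlib Require Import Reals List.
From mathcomp Require Import all_boot.

Set Implicit Arguments.
Unset Strict Implicit.
Unset Printing Implicit Defensive.

Local Open Scope R_scope.

Definition vec (n : nat) := 'I_n -> R.

Definition vzero (n : nat) : vec n := fun _ => R0.
Definition vadd (n : nat) (x y : vec n) : vec n := fun i => (x i + y i).
Definition vopp (n : nat) (x : vec n) : vec n := fun i => (- x i).
Definition vscale (n : nat) (a : R) (x : vec n) : vec n := fun i => (a * x i).

(* The standard form of signature (r,s) on R^{r+s}:
   <x,y> = x_0 y_0 + ... + x_{r-1} y_{r-1} - x_r y_r - ... - x_{r+s-1} y_{r+s-1}. *)
Definition sgn (r n : nat) (i : 'I_n) : R := if leq (nat_of_ord i).+1 r then R1 else (- R1).

Definition form (r s : nat) (x y : vec (r + s)) : R :=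
  \big[Rplus/R0]_(i < r + s) (sgn r i * x i * y i).

Definition aff (n : nat) := ((vec n -> vec n) * vec n)%type.

Definition aff_app (n : nat) (g : aff n) (x : vec n) : vec n := vadd (g.1 x) g.2.

Definition aff_id (n : nat) : aff n := ((fun x => x), @vzero n).

Definition aff_comp (n : nat) (g h : aff n) : aff n :=
  (fun x => g.1 (h.1 x), vadd (g.1 h.2) g.2).

Definition is_linear (n : nat) (L : vec n -> vec n) : Prop :=
  (forall x y, L (vadd x y) = vadd (L x) (L y)) /\
  (forall a x, L (vscale a x) = vscale a (L x)).

Definition is_iso (r s : nat) (g : aff (r + s)) : Prop :=
  is_linear g.1 /\ (forall x y, form (g.1 x) (g.1 y) = form x y).

Definition is_subgroup_Iso (r s : nat) (G : aff (r + s) -> Prop) : Prop :=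
  (forall g, G g -> is_iso g) /\
  G (@aff_id (r + s)) /\
  (forall g h, G g -> G h -> G (aff_comp g h)) /\
  (forall g, G g -> exists h, G h /\ aff_comp g h = @aff_id (r + s)
                                  /\ aff_comp h g = @aff_id (r + s)).

Definition centralizer (r s : nat) (G : aff (r + s) -> Prop) : aff (r + s) -> Prop :=
  fun c => is_iso c /\ forall g, G g -> aff_comp c g = aff_comp g c.

Definition center (n : nat) (G : aff n -> Prop) : aff n -> Prop :=
  fun g => G g /\ forall h, G h -> aff_comp g h = aff_comp h g.

Definition orbit (n : nat) (C : aff n -> Prop) (x : vec n) : vec n -> Prop :=
  fun y => exists c, C c /\ aff_app c x = y.

Definition is_open (n : nat) (S : vec n -> Prop) : Prop :=
  forall x, S x -> exists eps : R, (0 < eps) /\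
    forall y : vec n, (forall i, (Rabs (y i - x i) < eps)) -> S y.

Definition has_open_orbit (n : nat) (C : aff n -> Prop) : Prop :=
  exists x, is_open (orbit C x).

(* For gamma = (I + A, v), A = L - I. *)
Definition Apart (n : nat) (g : aff n) : vec n -> vec n :=
  fun x => vadd (g.1 x) (vopp x).

(* U_Lambda = sum over gamma in Lambda of im A_gamma (finite sums). *)
Definition U_of (n : nat) (Lam : aff n -> Prop) : vec n -> Prop :=
  fun y => exists l : list (aff n * vec n),
    (forall p, List.In p l -> Lam p.1) /\
    y = List.fold_right (fun p acc => vadd (Apart p.1 p.2) acc) (@vzero n) l.

Definition perp (r s : nat) (U : vec (r + s) -> Prop) : vec (r + s) -> Prop :=
  fun y => forall u, U u -> form u y = R0.

Definition U0 (r s : nat) (G : aff (r + s) -> Prop) : vec (r + s) -> Prop :=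
  fun y => U_of G y /\ perp (U_of G) y.

(* The centralizer C of Γ commutes with each γ = (I + A_γ, v_γ), so the displacement
   y ↦ γ y - y is C-equivariant and ⟨γ y - y, η y - y⟩ is constant along C-orbits, hence
   on the open orbit.  Along a segment y + t z this constant is a quadratic polynomial in t;
   its vanishing coefficients give Wolf's identities: im A_γ is totally isotropic, A_γ is
   skew, A_γ A_η = - A_η A_γ and A_γ v_η = - A_η v_γ.  Then the commutator [γ, η] is
   (I + 2 A_γ A_η, 2 A_γ v_η), which commutes with all of Γ, so A_γ A_η y ∈ U_Δ, and for
   x ⊥ U_Δ skewness gives ⟨A_η y, A_γ x⟩ = - ⟨A_γ A_η y, x⟩ = 0, i.e. A_γ x ∈ U_Γ^⊥. *)

From HB Require Import structures.
From Pilot Require Import Defs.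
From Stdlib Require Import Reals Lra FunctionalExtensionality.
From mathcomp Require Import all_boot.

Set Implicit Arguments.
Unset Strict Implicit.
Unset Printing Implicit Defensive.

Local Open Scope R_scope.

Lemma RplusA : associative Rplus. Proof. by move=> a b c; rewrite Rplus_assoc. Qed.
HB.instance Definition _ := Monoid.isComLaw.Build R R0 Rplus RplusA Rplus_comm Rplus_0_l.

Ltac vext := apply: functional_extensionality => ?; rewrite /vadd /vopp /vscale /vzero /=; ring.

Lemma quadratic_coeffs_eq0 (b c t : R) : 0 < t ->
  (forall tau, 0 < tau <= t -> tau * b + tau * tau * c = 0) -> b = 0 /\ c = 0.
Proof.
move=> t_gt0 vanish; have q1 := vanish t ltac:(lra); have q2 := vanish (t / 2) ltac:(lra).
have c0 : c = 0.
  apply: (Rmult_eq_reg_l (t * t)); last by nra.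
  have -> : t * t * c = 2 * (t * b + t * t * c) - 4 * (t / 2 * b + t / 2 * (t / 2) * c).
    by field.
  rewrite q1 q2; ring.
split => //; apply: (Rmult_eq_reg_l t); last lra.
rewrite c0 in q1; lra.
Qed.

Section Vectors.
Variable n : nat.
Implicit Types (x y z : vec n) (g h c : aff n).

Section LinearMap.
Variable L : vec n -> vec n.
Hypothesis L_lin : is_linear L.

Lemma linear0 : L (@vzero n) = @vzero n.
Proof. have -> : @vzero n = vscale 0 (@vzero n) by vext. rewrite L_lin.2; vext. Qed.

Lemma linearN x : L (vopp x) = vopp (L x).
Proof. have -> : vopp x = vscale (-1) x by vext. rewrite L_lin.2; vext. Qed.

End LinearMap.

Lemma aff_lin_Apart g x : g.1 x = vadd x (Apart g x).
Proof. rewrite /Apart; vext. Qed.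

Section LinearAffine.
Variable g : aff n.
Hypothesis g_lin : is_linear g.1.

Lemma ApartD x y : Apart g (vadd x y) = vadd (Apart g x) (Apart g y).
Proof. rewrite /Apart g_lin.1; vext. Qed.

Lemma ApartZ a x : Apart g (vscale a x) = vscale a (Apart g x).
Proof. rewrite /Apart g_lin.2; vext. Qed.

Lemma Apart_lin : is_linear (Apart g).
Proof. by split; [exact: ApartD | exact: ApartZ]. Qed.

End LinearAffine.

Lemma open_segment (S : vec n -> Prop) x z : is_open S -> S x ->
  exists t, 0 < t /\ forall tau, 0 < tau <= t -> S (vadd x (vscale tau z)).
Proof.
move=> S_open Sx; have [eps [eps_gt0 ball_eps]] := S_open x Sx.
have sum_ge0 (P : pred 'I_n) : 0 <= \big[Rplus/R0]_(j < n | P j) Rabs (z j).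
  by apply: big_ind => [|? ? ? ?|? _]; [lra | lra | apply: Rabs_pos].
set M := 1 + \big[Rplus/R0]_(i < n) Rabs (z i).
have M_gt0 : 0 < M by have := sum_ge0 xpredT; rewrite /M; lra.
have z_lt_M i : Rabs (z i) < M.
  rewrite /M (bigD1 i) //=; set T := \big[_/_]_(_ < n | _) _.
  have : 0 <= T by apply: sum_ge0.
  lra.
exists (eps / M); split; first exact: Rdiv_lt_0_compat.
move=> tau tau_bd; apply: ball_eps => i; rewrite /vadd /vscale.
have -> : x i + tau * z i - x i = tau * z i by ring.
rewrite Rabs_mult Rabs_right; last lra.
have eps_eq : eps = eps / M * M by field; lra.
have := z_lt_M i; have := Rabs_pos (z i); nra.
Qed.

Definition disp g y : vec n := vadd (Apart g y) g.2.

Lemma dispD g x y t : is_linear g.1 ->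
  disp g (vadd x (vscale t y)) = vadd (disp g x) (vscale t (Apart g y)).
Proof. by move=> g_lin; rewrite /disp (ApartD g_lin) (ApartZ g_lin); vext. Qed.

Lemma disp_commute c g y : is_linear c.1 -> is_linear g.1 ->
  aff_comp c g = aff_comp g c -> disp g (aff_app c y) = c.1 (disp g y).
Proof.
move=> c_lin g_lin cg_gc.
have lin_part x : c.1 (g.1 x) = g.1 (c.1 x) := equal_f (f_equal fst cg_gc) x.
have transl_part : vadd (c.1 g.2) c.2 = vadd (g.1 c.2) g.2 := f_equal snd cg_gc.
rewrite /disp /Apart /aff_app g_lin.1 !c_lin.1 (linearN c_lin) lin_part.
apply: functional_extensionality => i; have := equal_f transl_part i.
rewrite /vadd /vopp; lra.
Qed.

Definition unip (A : vec n -> vec n) (v : vec n) : aff n := (fun x => vadd x (A x), v).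

Lemma Apart_unip A v x : Apart (unip A v) x = A x.
Proof. rewrite /Apart /unip; vext. Qed.

Lemma aff_unipE g : g = unip (Apart g) g.2.
Proof.
by case: g => L v; congr pair; apply: functional_extensionality => x; rewrite /Apart; vext.
Qed.

Section Unipotent.
Variables (A1 A2 A3 : vec n -> vec n) (v1 v2 v3 : vec n).
Hypotheses (A1_lin : is_linear A1) (A2_lin : is_linear A2) (A3_lin : is_linear A3).
Hypotheses (A1_sq0 : forall x, A1 (A1 x) = @vzero n) (A2_sq0 : forall x, A2 (A2 x) = @vzero n).
Hypotheses (A1v1 : A1 v1 = @vzero n) (A2v2 : A2 v2 = @vzero n).
Hypotheses (A21 : forall x, A2 (A1 x) = vopp (A1 (A2 x))) (A2v1 : A2 v1 = vopp (A1 v2)).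
Hypotheses (A31 : forall x, A3 (A1 x) = vopp (A1 (A3 x)))
           (A32 : forall x, A3 (A2 x) = vopp (A2 (A3 x))) (A3v2 : A3 v2 = vopp (A2 v3)).

Lemma unip_rinv g' : aff_comp (unip A1 v1) g' = @aff_id n ->
  g' = unip (fun x => vopp (A1 x)) (vopp v1).
Proof.
move=> gg'; rewrite /aff_comp /aff_id /unip in gg'.
have lin_eq x : vadd (g'.1 x) (A1 (g'.1 x)) = x := equal_f (f_equal fst gg') x.
have transl_eq : vadd (vadd g'.2 (A1 g'.2)) v1 = @vzero n := f_equal snd gg'.
apply: injective_projections => /=.
  apply: functional_extensionality => x.
  have A1g' : A1 (g'.1 x) = A1 x by rewrite -{2}(lin_eq x) A1_lin.1 A1_sq0; vext.
  apply: functional_extensionality => i; have := equal_f (lin_eq x) i.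
  rewrite A1g' /vadd /vopp; lra.
have A1g'2 : A1 g'.2 = @vzero n.
  have := f_equal A1 transl_eq; rewrite !A1_lin.1 A1_sq0 A1v1 (linear0 A1_lin) => E.
  apply: functional_extensionality => i; have := equal_f E i.
  by rewrite /vadd /vzero; lra.
apply: functional_extensionality => i; have := equal_f transl_eq i.
rewrite A1g'2 /vadd /vopp /vzero; lra.
Qed.

Lemma unip_commutator :
  aff_comp (unip A1 v1) (aff_comp (unip A2 v2)
    (aff_comp (unip (fun x => vopp (A1 x)) (vopp v1)) (unip (fun x => vopp (A2 x)) (vopp v2))))
  = unip (fun x => vscale 2 (A1 (A2 x))) (vscale 2 (A1 v2)).
Proof.
rewrite /aff_comp /unip /=; congr pair; last first.
  rewrite !(A1_lin.1, A2_lin.1, linearN A1_lin, linearN A2_lin, linear0 A1_lin,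
             A1_sq0, A2_sq0, A21, A1v1, A2v2, A2v1).
  vext.
apply: functional_extensionality => x /=.
rewrite !(A1_lin.1, A2_lin.1, linearN A1_lin, linearN A2_lin, linear0 A1_lin,
           A1_sq0, A2_sq0, A21).
vext.
Qed.

Lemma unip_commutator_commute :
  aff_comp (unip (fun x => vscale 2 (A1 (A2 x))) (vscale 2 (A1 v2))) (unip A3 v3)
  = aff_comp (unip A3 v3) (unip (fun x => vscale 2 (A1 (A2 x))) (vscale 2 (A1 v2))).
Proof.
rewrite /aff_comp /unip /=; congr pair; last first.
  rewrite !(A1_lin.1, A2_lin.1, A3_lin.1, A3_lin.2, linearN A1_lin, linearN A2_lin,
             A31, A32, A3v2).
  vext.
apply: functional_extensionality => x /=.
rewrite !(A1_lin.1, A2_lin.1, A3_lin.1, A3_lin.2, linearN A1_lin, linearN A2_lin,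
           A31, A32).
vext.
Qed.

End Unipotent.

Lemma vadd_eq0 x y : vadd x y = @vzero n -> x = vopp y.
Proof.
move=> xy0; apply: functional_extensionality => i; have := equal_f xy0 i.
by rewrite /vadd /vopp /vzero; lra.
Qed.

Lemma U_of_Apart (Lam : aff n -> Prop) g x : Lam g -> U_of Lam (Apart g x).
Proof. by move=> Lg; exists [:: (g, x)]; split; [move=> p [<-|[]] | vext]. Qed.

End Vectors.

Section Form.
Variables r s : nat.
Notation n := (r + s)%nat.
Notation B := (@form r s).
Implicit Types x y z : vec n.

Lemma form_sym x y : B x y = B y x.
Proof. by rewrite /form; apply: eq_bigr => i _; ring. Qed.

Lemma formDl x y z : B (vadd x y) z = B x z + B y z.
Proof. by rewrite /form -big_split; apply: eq_bigr => i _; rewrite /vadd /=; ring. Qed.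

Lemma formZl a x z : B (vscale a x) z = a * B x z.
Proof.
rewrite /form; apply: (big_rec2 (fun u w => u = a * w)); first ring.
by move=> i u w _ ->; rewrite /vscale; ring.
Qed.

Lemma form0l z : B (@vzero n) z = 0.
Proof. by rewrite /form; apply: big1 => i _; rewrite /vzero; ring. Qed.

Lemma formDr x y z : B z (vadd x y) = B z x + B z y.
Proof. by rewrite form_sym formDl !(form_sym z). Qed.

Lemma formZr a x z : B z (vscale a x) = a * B z x.
Proof. by rewrite form_sym formZl (form_sym z). Qed.

Lemma formDD x y u w : B (vadd x y) (vadd u w) = B x u + B x w + B y u + B y w.
Proof. by rewrite formDl !formDr; ring. Qed.

Lemma form_vadd_vscale x y u w t :
  B (vadd x (vscale t u)) (vadd y (vscale t w)) = B x y + t * (B u y + B x w) + t * t * B u w.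
Proof. by rewrite formDD !formZl !formZr; ring. Qed.

Lemma form_nondeg x : (forall y, B x y = 0) -> x = @vzero n.
Proof.
move=> x_perp; apply: functional_extensionality => i.
pose e : vec n := fun j => if j == i then sgn r i else 0.
have := x_perp e; rewrite /form (bigD1 i) //= big1 => [|j /negbTE ji]; last first.
  by rewrite /e ji; ring.
by rewrite /e eqxx /vzero /sgn; case: ifP => _; lra.
Qed.

Lemma perp_U_of (Lam : aff n -> Prop) x :
  (forall g y, Lam g -> B (Apart g y) x = 0) -> perp (U_of Lam) x.
Proof.
move=> gen_perp u [l [l_Lam ->]]; elim: l l_Lam => [|[g y] l IHl] l_Lam /=.
  exact: form0l.
rewrite formDl gen_perp ?IHl; first ring.
- by move=> p l_p; apply: l_Lam; right.
- by apply: (l_Lam (g, y)); left.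
Qed.

End Form.

Section OpenOrbit.
Variables (r s : nat) (G : aff (r + s) -> Prop).
Notation n := (r + s)%nat.
Notation B := (@form r s).
Hypothesis HG : is_subgroup_Iso G.

Lemma G_lin g : G g -> is_linear g.1.
Proof. by case/HG.1. Qed.

Lemma G_Apart_lin g : G g -> is_linear (Apart g).
Proof. by move/G_lin/Apart_lin. Qed.

Lemma centralizer_id : centralizer G (@aff_id n).
Proof.
split; first by split; [split=> *; vext | ].
move=> g Gg; rewrite /aff_comp /=; congr pair; rewrite (linear0 (G_lin Gg)); vext.
Qed.

Lemma form_disp_orbit c g h y : centralizer G c -> G g -> G h ->
  B (disp g (aff_app c y)) (disp h (aff_app c y)) = B (disp g y) (disp h y).
Proof.
move=> [[c_lin c_iso] c_comm] Gg Gh.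
by rewrite !disp_commute ?c_comm //; apply: G_lin.
Qed.

Variable x0 : vec n.
Hypothesis orbit_open : is_open (Defs.orbit (centralizer G) x0).

Lemma form_Apart_disp g h z : G g -> G h ->
  B (Apart g z) (disp h x0) + B (disp g x0) (Apart h z) = 0 /\ B (Apart g z) (Apart h z) = 0.
Proof.
move=> Gg Gh.
have x0_orbit : Defs.orbit (centralizer G) x0 x0.
  exists (@aff_id n); split; [exact: centralizer_id | rewrite /aff_app /aff_id; vext].
have [t [t_gt0 segment]] := open_segment z orbit_open x0_orbit.
apply: (quadratic_coeffs_eq0 t_gt0) => tau /segment [c [Cc c_x0]].
have := form_disp_orbit x0 Cc Gg Gh.
rewrite c_x0 (dispD _ _ _ (G_lin Gg)) (dispD _ _ _ (G_lin Gh)) form_vadd_vscale; lra.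
Qed.

Lemma form_Apart_polar g h u w : G g -> G h ->
  B (Apart g u) (Apart h w) + B (Apart g w) (Apart h u) = 0.
Proof.
move=> Gg Gh; have := (form_Apart_disp (vadd u w) Gg Gh).2.
rewrite (ApartD (G_lin Gg)) (ApartD (G_lin Gh)) formDD.
have := (form_Apart_disp u Gg Gh).2; have := (form_Apart_disp w Gg Gh).2; lra.
Qed.

Lemma form_Apart_isotropic g u w : G g -> B (Apart g u) (Apart g w) = 0.
Proof.
by move=> Gg; have := form_Apart_polar u w Gg Gg; rewrite (form_sym (Apart g w)); lra.
Qed.

Lemma form_Apart_skew g u w : G g -> B (Apart g u) w = - B u (Apart g w).
Proof.
move=> Gg; have := (HG.1 g Gg).2 u w.
rewrite !aff_lin_Apart formDD (form_Apart_isotropic u w Gg); lra.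
Qed.

Lemma Apart_sq0 g : G g -> forall u, Apart g (Apart g u) = @vzero n.
Proof.
move=> Gg u; apply: form_nondeg => w.
by rewrite form_Apart_skew // form_Apart_isotropic //; ring.
Qed.

Lemma Apart_anticomm g h : G g -> G h ->
  forall u, Apart g (Apart h u) = vopp (Apart h (Apart g u)).
Proof.
move=> Gg Gh u; apply: vadd_eq0; apply: form_nondeg => w.
rewrite formDl (form_Apart_skew (Apart h u) w Gg) (form_Apart_skew (Apart g u) w Gh).
rewrite (form_sym (Apart h u)).
have := form_Apart_polar u w Gg Gh; lra.
Qed.

Lemma Apart_transl_anticomm g h : G g -> G h -> Apart g h.2 = vopp (Apart h g.2).
Proof.
move=> Gg Gh; apply: vadd_eq0; apply: form_nondeg => z.
rewrite formDl !form_Apart_skew //.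
have := (form_Apart_disp z Gg Gh).1; rewrite /disp formDr formDl.
have := form_Apart_polar z x0 Gg Gh; rewrite (form_sym h.2); lra.
Qed.

Lemma Apart_transl0 g : G g -> Apart g g.2 = @vzero n.
Proof.
move=> Gg; have := Apart_transl_anticomm Gg Gg => E.
apply: functional_extensionality => i; have := equal_f E i; rewrite /vopp /vzero; lra.
Qed.

Lemma G_rinv g g' : G g -> aff_comp g g' = @aff_id n ->
  g' = unip (fun x => vopp (Apart g x)) (vopp g.2).
Proof.
move=> Gg; rewrite {1}(aff_unipE g).
by apply: unip_rinv; [exact: G_Apart_lin | exact: Apart_sq0 | exact: Apart_transl0].
Qed.

Lemma commutatorE g h g' h' : G g -> G h ->
  aff_comp g g' = @aff_id n -> aff_comp h h' = @aff_id n ->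
  aff_comp g (aff_comp h (aff_comp g' h'))
  = unip (fun x => vscale 2 (Apart g (Apart h x))) (vscale 2 (Apart g h.2)).
Proof.
move=> Gg Gh /(G_rinv Gg) -> /(G_rinv Gh) ->.
rewrite {1}(aff_unipE g) {1}(aff_unipE h).
apply: unip_commutator; do ?[exact: G_Apart_lin | exact: Apart_sq0 | exact: Apart_transl0].
- exact: Apart_anticomm.
- exact: Apart_transl_anticomm.
Qed.

Lemma Apart2_U_center g h y : G g -> G h -> U_of (center G) (Apart g (Apart h y)).
Proof.
move=> Gg Gh.
have [g' [Gg' [gg' _]]] := HG.2.2.2 g Gg.
have [h' [Gh' [hh' _]]] := HG.2.2.2 h Gh.
set k := aff_comp g (aff_comp h (aff_comp g' h')).
have kE : k = unip (fun x => vscale 2 (Apart g (Apart h x))) (vscale 2 (Apart g h.2)).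
  exact: commutatorE.
have Ck : center G k.
  split; first by do 3 apply: HG.2.2.1 => //.
  move=> m Gm; rewrite kE (aff_unipE m).
  apply: unip_commutator_commute; do ?exact: G_Apart_lin.
  - exact: Apart_anticomm.
  - exact: Apart_anticomm.
  - exact: Apart_transl_anticomm.
have -> : Apart g (Apart h y) = Apart k (vscale (/ 2) y).
  rewrite kE Apart_unip (ApartZ (G_lin Gh)) (ApartZ (G_lin Gg)).
  by apply: functional_extensionality => i; rewrite /vscale; field.
exact: U_of_Apart.
Qed.

End OpenOrbit.

Theorem lemma4p2 (r s : nat) (G : aff (r + s) -> Prop) :
  is_subgroup_Iso G ->
  has_open_orbit (centralizer G) ->
  forall g : aff (r + s), G g ->
  forall x : vec (r + s), perp (U_of (center G)) x ->
  U0 G (Apart g x).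
Proof.
move=> HG [x0 orbit_open] g Gg x x_perp; split; first exact: U_of_Apart.
apply: perp_U_of => h y Gh.
rewrite form_sym (form_Apart_skew HG orbit_open _ _ Gg) form_sym.
by rewrite (x_perp _ (Apart2_U_center HG orbit_open _ Gg Gh)); ring.
Qed.
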